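(* Let $I=\langle Q,D,\tau_{in},\tau_{out},\tau_{mem}\rangle$ be an instance of Forget where $Q$ is nonrecursive, connected, contains no rigid atoms and no time points in its rules, and let $Q_1,Q_2$ be the queries constructed from $I$ as in the context. Then Forget holds for $I$ if and only if $Q_1\sqsubseteq Q_2$.
   Context: Temporal Datalog. Constants are partitioned into objects and integer time points; variables into object variables and time variables. A time term is a time point, a time variable, or an expression $t+k$ with $t$ a time variable and $k\in\mathbb{Z}$. Each predicate is either extensional (EDB) or intensional (IDB) and has an arity $n\ge0$, each position being of object sort or time sort; a predicate is rigid if all its positions are of object sort, and temporal if its last position is of time sort and all others are of object sort. An atom $P(t_1,\dots,t_n)$ has terms of the required sorts. A rule is $\bigwedge_i\alpha_i\to\alpha$ with $\alpha$ and all $\alpha_i$ rigid or temporal atoms, $\alpha$ IDB whenever the body is nonempty, and every head variable occurring in the body. A program is a finite set of rules. A fact is a ground rigid or temporal atom without $+$ (identified with the rule $\top\to\alpha$); a dataset is a finite set of EDB facts. Rules are read as universally quantified first-order sentences with $+$ interpreted as integer addition; $\Pi\models\alpha$ denotes entailment. A query is $Q=\langle P_Q,\Pi_Q\rangle$ with $\Pi_Q$ a program and $P_Q$ an IDB predicate of $\Pi_Q$; it is temporal if $P_Q$ is temporal. $Q(D)$ is the set of tuples $\vec a$ of constants with $\Pi_Q\cup D\models P_Q(\vec a)$; for a temporal query $Q$ and time point $\tau$, $Q(D,\tau)$ is the set of tuples of objects $\vec o$ with $\Pi_Q\cup D\models P_Q(\vec o,\tau)$. $Q_1\sqsubseteq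 Q_2$ means $Q_1(D)\subseteq Q_2(D)$ for every dataset $D$. For a dataset $D$ and time point $\tau$, $D[\tau]$ is the set of all rigid facts of $D$ together with the temporal facts of $D$ whose time argument is $>\tau$. A $\tau_{in}$-history is a dataset consisting of rigid facts and temporal facts with time argument $\le\tau_{in}$; a $\tau_{in}$-update is a dataset consisting of temporal facts with time argument $>\tau_{in}$. Forget: an instance is $\langle Q,D,\tau_{in},\tau_{out},\tau_{mem}\rangle$ with $Q$ a temporal query, $D$ a $\tau_{in}$-history and $\tau_{mem}\le\tau_{out}\le\tau_{in}$; Forget holds for it iff $Q(D\cup U,\tau)=Q(D[\tau_{mem}]\cup U,\tau)$ for every $\tau_{in}$-update $U$ and every time point $\tau\ge\tau_{out}$. Predicate $P$ depends on $P'$ in $\Pi$ if some rule of $\Pi$ has $P$ in the head and $P'$ in the body; $\Pi$ (or a query with program $\Pi$) is nonrecursive if the graph of this dependency relation is acyclic. A rule is connected if it contains at most one time variable and, if a time variable occurs in the body, it also occurs in the head; a query is connected if all its rules are. For a time term $s$, $\Delta(s)=k$ if $s=t+k$ with $t$ a variable, and $\Delta(s)=0$ otherwise. The radius of a connected rule $r$ mentioning a time variable is the maximum of $|\Delta(s)-\Delta(s')|$ where $s$ is the time argument of the head and $s'$ the time argument of a body atom of $r$. The radius $\mathrm{rad}(\Pi)$ of a connected program is the number of rules of $\Pi$ times the maximum radius of a rule of $\Pi$; $\mathrm{rad}(Q)=\mathrm{rad}(\Pi_Q)$. Construction: a time point $\tau$ is output-relevant if $\tau_{out}\le\tau\le\tau_{mem}+\mathrm{rad}(Q)$,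 and update-relevant if $\tau_{in}<\tau\le\tau_{mem}+2\,\mathrm{rad}(Q)$. Let $\psi$ map each temporal EDB predicate to a fresh temporal IDB predicate of the same arity (applied to programs/datasets by renaming). Let $B$ be a fresh unary temporal IDB predicate and $D_0=\{B(\tau):\tau\text{ update-relevant}\}$. Let $\Pi$ be the smallest program containing: (i) each rule of $\psi(\Pi_Q)$ whose head predicate differs from $P_Q$; (ii) each rule obtained from a rule of $\psi(\Pi_Q)$ with head predicate $P_Q$ by substituting its time variable so that the time argument of the head becomes an output-relevant time point; (iii) the rule $P(\vec x,t)\wedge B(t)\to\psi(P)(\vec x,t)$ for each temporal EDB predicate $P$ of $\Pi_Q$. Then $Q_1=\langle P_Q,\Pi\cup D_0\cup\psi(D)\rangle$ and $Q_2=\langle P_Q,\Pi\cup D_0\cup\psi(D[\tau_{mem}])\rangle$. *)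

From Stdlib Require Import Bool ZArith List Relations.
Import ListNotations.
Open Scope Z_scope.

(** Object constants (a countably infinite supply). Time points are integers. *)
Definition Obj := nat.

(** A signature: predicates with EDB/IDB status, number of object positions,
    and whether they are temporal (object positions followed by one time
    position) or rigid (object positions only). *)
Record Sig := {
  pred : Type;
  peq_dec : forall p q : pred, {p = q} + {p <> q};
  is_edb : pred -> bool;
  oarity : pred -> nat;
  is_temporal : pred -> bool
}.

Inductive oterm := OVar (x : nat) | OCst (o : Obj).
Inductive tterm := TCst (z : Z) | TVar (t : nat) | TShift (t : nat) (k : Z).

Record atom (S : Sig) := mkAtom { apred : pred S; aobj : list oterm; atime : option tterm }.
Arguments mkAtom {S}. Arguments apred {S}. Arguments aobj {S}. Arguments atime {S}.

Record rule (S : Sig) := mkRule { body : list (atom S); head : atom S }.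
Arguments mkRule {S}. Arguments body {S}. Arguments head {S}.

Definition program (S : Sig) := list (rule S).

Definition wf_atom {S} (a : atom S) : Prop :=
  length (aobj a) = oarity S (apred a) /\
  (is_temporal S (apred a) = true <-> atime a <> None).

Definition ovars_of_atom {S} (a : atom S) : list nat :=
  flat_map (fun o => match o with OVar x => [x] | OCst _ => [] end) (aobj a).
Definition tvar_of_term (s : tterm) : list nat :=
  match s with TCst _ => [] | TVar t => [t] | TShift t _ => [t] end.
Definition tvars_of_atom {S} (a : atom S) : list nat :=
  match atime a with Some s => tvar_of_term s | None => [] end.

Definition wf_rule {S} (r : rule S) : Prop :=
  wf_atom (head r) /\ Forall wf_atom (body r) /\
  (body r <> [] -> is_edb S (apred (head r)) = false) /\
  (forall x, In x (ovars_of_atom (head r)) -> In x (flat_map ovars_of_atom (body r))) /\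
  (forall t, In t (tvars_of_atom (head r)) -> In t (flat_map tvars_of_atom (body r))).

(** A program is a finite set of rules, represented by a duplicate-free list. *)
Definition wf_program {S} (P : program S) : Prop := NoDup P /\ Forall wf_rule P.

Definition is_fact {S} (a : atom S) : Prop :=
  wf_atom a /\ Forall (fun o => exists c, o = OCst c) (aobj a) /\
  (atime a = None \/ exists z, atime a = Some (TCst z)).
Definition fact_rule {S} (a : atom S) : rule S := mkRule [] a.
Definition dataset {S} (D : list (atom S)) : Prop :=
  Forall (fun a => is_fact a /\ is_edb S (apred a) = true) D.

(** First-order semantics: the object sort is interpreted in an arbitrary
    domain, the time sort in Z (time points denote themselves, + is integer
    addition). *)
Record interp (S : Sig) := {
  dom : Type;
  cst : Obj -> dom;
  rel : pred S -> list dom -> option Z -> Prop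
}.
Arguments dom {S}. Arguments cst {S}. Arguments rel {S}.

Definition eval_o {S} (I : interp S) (ov : nat -> dom I) (o : oterm) : dom I :=
  match o with OVar x => ov x | OCst c => cst I c end.
Definition eval_t (tv : nat -> Z) (s : tterm) : Z :=
  match s with TCst z => z | TVar t => tv t | TShift t k => tv t + k end.

Definition holds {S} (I : interp S) (ov : nat -> dom I) (tv : nat -> Z) (a : atom S) : Prop :=
  rel I (apred a) (map (eval_o I ov) (aobj a)) (option_map (eval_t tv) (atime a)).

Definition sat_rule {S} (I : interp S) (r : rule S) : Prop :=
  forall ov tv, (forall b, In b (body r) -> holds I ov tv b) -> holds I ov tv (head r).

Definition is_model {S} (I : interp S) (P : program S) : Prop :=
  forall r, In r P -> sat_rule I r.

Definition entails {S} (P : program S) (a : atom S) : Prop :=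
  forall I : interp S, is_model I P -> forall ov tv, holds I ov tv a.

Record query (S : Sig) := mkQuery { qpred : pred S; qprog : program S }.
Arguments mkQuery {S}. Arguments qpred {S}. Arguments qprog {S}.

Definition preds_of {S} (P : program S) : list (pred S) :=
  flat_map (fun r => map apred (head r :: body r)) P.

Definition wf_query {S} (Q : query S) : Prop :=
  wf_program (qprog Q) /\ is_edb S (qpred Q) = false /\ In (qpred Q) (preds_of (qprog Q)).

Definition temporal_query {S} (Q : query S) : Prop := is_temporal S (qpred Q) = true.

Definition ground_atom {S} (p : pred S) (os : list Obj) (ot : option Z) : atom S :=
  mkAtom p (map OCst os) (option_map TCst ot).

Definition Qans {S} (Q : query S) (D : list (atom S)) (os : list Obj) (ot : option Z) : Prop :=
  length os = oarity S (qpred Q) /\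
  (is_temporal S (qpred Q) = true <-> ot <> None) /\
  entails (qprog Q ++ map fact_rule D) (ground_atom (qpred Q) os ot).

Definition Qans_at {S} (Q : query S) (D : list (atom S)) (tau : Z) (os : list Obj) : Prop :=
  Qans Q D os (Some tau).

Definition contained {S} (Q1 Q2 : query S) : Prop :=
  forall D, dataset D -> forall os ot, Qans Q1 D os ot -> Qans Q2 D os ot.

Definition keep_after {S} (tau : Z) (a : atom S) : bool :=
  match atime a with
  | None => true
  | Some (TCst z) => Z.ltb tau z
  | Some _ => true
  end.
Definition restrict {S} (D : list (atom S)) (tau : Z) : list (atom S) :=
  filter (keep_after tau) D.

Definition history {S} (tin : Z) (D : list (atom S)) : Prop :=
  dataset D /\
  Forall (fun a => is_temporal S (apred a) = false \/
                   exists z, atime a = Some (TCst z) /\ z <= tin) D.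

Definition update {S} (tin : Z) (U : list (atom S)) : Prop :=
  dataset U /\
  Forall (fun a => is_temporal S (apred a) = true /\
                   exists z, atime a = Some (TCst z) /\ tin < z) U.

Definition forget_instance {S} (Q : query S) (D : list (atom S)) (tin tout tmem : Z) : Prop :=
  wf_query Q /\ temporal_query Q /\ history tin D /\ tmem <= tout /\ tout <= tin.

Definition forget {S} (Q : query S) (D : list (atom S)) (tin tout tmem : Z) : Prop :=
  forall U, update tin U -> forall tau, tout <= tau ->
  forall os, Qans_at Q (D ++ U) tau os <-> Qans_at Q (restrict D tmem ++ U) tau os.

Definition depends {S} (P : program S) (p p' : pred S) : Prop :=
  exists r, In r P /\ apred (head r) = p /\ exists b, In b (body r) /\ apred b = p'.
Definition nonrecursive {S} (P : program S) : Prop :=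
  forall p, ~ clos_trans _ (depends P) p p.

Definition tvars_of_rule {S} (r : rule S) : list nat :=
  tvars_of_atom (head r) ++ flat_map tvars_of_atom (body r).
Definition connected_rule {S} (r : rule S) : Prop :=
  (forall t1 t2, In t1 (tvars_of_rule r) -> In t2 (tvars_of_rule r) -> t1 = t2) /\
  (forall t, In t (flat_map tvars_of_atom (body r)) -> In t (tvars_of_atom (head r))).
Definition connected {S} (P : program S) : Prop := forall r, In r P -> connected_rule r.

Definition atoms_of_rule {S} (r : rule S) : list (atom S) := head r :: body r.
Definition no_rigid_atoms {S} (P : program S) : Prop :=
  forall r a, In r P -> In a (atoms_of_rule r) -> is_temporal S (apred a) = true.
Definition no_time_points {S} (P : program S) : Prop :=
  forall r a z, In r P -> In a (atoms_of_rule r) -> atime a <> Some (TCst z).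

Definition delta (s : tterm) : Z := match s with TShift _ k => k | _ => 0 end.
Definition rule_rad {S} (r : rule S) : Z :=
  match atime (head r) with
  | None => 0
  | Some sh =>
      fold_right Z.max 0
        (map (fun b => match atime b with
                       | Some sb => Z.abs (delta sh - delta sb)
                       | None => 0 end) (body r))
  end.
Definition rad {S} (P : program S) : Z :=
  Z.of_nat (length P) * fold_right Z.max 0 (map rule_rad P).

Definition zrange (lo hi : Z) : list Z :=
  map (fun i => lo + Z.of_nat i) (seq 0 (Z.to_nat (hi - lo + 1))).

Inductive epred (P : Type) := EOrig (p : P) | EPsi (p : P) | EB.
Arguments EOrig {P}. Arguments EPsi {P}. Arguments EB {P}.

Definition epred_eq_dec (S : Sig) : forall p q : epred (pred S), {p = q} + {p <> q}.
Proof. decide equality; apply peq_dec. Defined.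

Definition ext (S : Sig) : Sig := {|
  pred := epred (pred S);
  peq_dec := epred_eq_dec S;
  is_edb := fun p => match p with EOrig p => is_edb S p | _ => false end;
  oarity := fun p => match p with EOrig p | EPsi p => oarity S p | EB => O end;
  is_temporal := fun p => match p with EOrig p => is_temporal S p | _ => true end
|}.

Definition psi_pred {S} (p : pred S) : pred (ext S) :=
  if is_edb S p && is_temporal S p then EPsi p else EOrig p.
Definition psi_atom {S} (a : atom S) : atom (ext S) :=
  mkAtom (psi_pred (apred a)) (aobj a) (atime a).
Definition psi_rule {S} (r : rule S) : rule (ext S) :=
  mkRule (map psi_atom (body r)) (psi_atom (head r)).

Definition subst_tterm (t : nat) (c : Z) (s : tterm) : tterm :=
  match s with
  | TCst z => TCst z
  | TVar t' => if Nat.eqb t' t then TCst c else TVar t'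
  | TShift t' k => if Nat.eqb t' t then TCst (c + k) else TShift t' k
  end.
Definition subst_atom {S} (t : nat) (c : Z) (a : atom S) : atom S :=
  mkAtom (apred a) (aobj a) (option_map (subst_tterm t c) (atime a)).
Definition subst_rule {S} (t : nat) (c : Z) (r : rule S) : rule S :=
  mkRule (map (subst_atom t c) (body r)) (subst_atom t c (head r)).

Definition inst_head {S} (tau : Z) (r : rule S) : list (rule S) :=
  match atime (head r) with
  | Some (TVar t) => [subst_rule t tau r]
  | Some (TShift t k) => [subst_rule t (tau - k) r]
  | Some (TCst z) => if Z.eqb z tau then [r] else []
  | None => []
  end.

Section Construction.
Context {S : Sig} (Q : query S) (tin tout tmem : Z).

Definition out_range : list Z := zrange tout (tmem + rad (qprog Q)).
Definition upd_range : list Z := zrange (tin + 1) (tmem + 2 * rad (qprog Q)).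

Definition is_PQ_head (r : rule (ext S)) : bool :=
  if peq_dec (ext S) (apred (head r)) (EOrig (qpred Q)) then true else false.

Definition part_i : program (ext S) :=
  filter (fun r => negb (is_PQ_head r)) (map psi_rule (qprog Q)).
Definition part_ii : program (ext S) :=
  flat_map (fun r => flat_map (fun tau => inst_head tau r) out_range)
           (filter is_PQ_head (map psi_rule (qprog Q))).
Definition copy_rule (p : pred S) : rule (ext S) :=
  let xs := map OVar (seq 0 (oarity S p)) in
  mkRule (S := ext S) [mkAtom (S := ext S) (EOrig p) xs (Some (TVar 0)); mkAtom (S := ext S) EB [] (Some (TVar 0))]
         (mkAtom (S := ext S) (EPsi p) xs (Some (TVar 0))).
Definition part_iii : program (ext S) :=
  map copy_rule (filter (fun p => is_edb S p && is_temporal S p) (preds_of (qprog Q))).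

Definition Pi_constr : program (ext S) := part_i ++ part_ii ++ part_iii.

Definition D0 : list (atom (ext S)) :=
  map (fun tau => mkAtom (S := ext S) EB [] (Some (TCst tau))) upd_range.

Definition Q1 (D : list (atom S)) : query (ext S) :=
  mkQuery (S := ext S) (EOrig (qpred Q)) (Pi_constr ++ map fact_rule (D0 ++ map psi_atom D)).
Definition Q2 (D : list (atom S)) : query (ext S) :=
  mkQuery (S := ext S) (EOrig (qpred Q)) (Pi_constr ++ map fact_rule (D0 ++ map psi_atom (restrict D tmem))).
End Construction.

(* If [Q] is nonrecursive and connected, a temporal atom at time [z] can influence an answer
   at time [tau] only if [|z - tau| <= rad(Q)]: a dependency path has at most as many steps as
   there are rules, and each step shifts time by at most the maximal rule radius.  Making every
   other temporal atom of a model true therefore gives again a model ([pad]).  This shows that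
   answers after [tmem + rad(Q)] never see the forgotten facts, and that the program of [Q1]
   (resp. [Q2]), fed with the update facts inside the update-relevant window, derives [P_Q]
   at an output-relevant time exactly when [Q] does on [D ∪ U] (resp. [D[tmem] ∪ U]).  Datasets
   over the extended signature and updates translate into each other ([lift], [unlift_update]),
   so Forget and [Q1 ⊑ Q2] coincide. *)

From Stdlib Require Import Bool ZArith List Lia Classical Relations.
Import ListNotations.
Open Scope Z_scope.

Lemma fact_entailed {Sg} (P : program Sg) a : In (fact_rule a) P -> entails P a.
Proof. intros H I HI ov tv. apply (HI _ H ov tv). simpl. tauto. Qed.

Lemma entails_mono {Sg} (P P' : program Sg) a : incl P P' -> entails P a -> entails P' a.
Proof. intros Hi H I HI. apply H. intros r Hr. apply HI, Hi, Hr. Qed.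

Lemma holds_ground {Sg} (I : interp Sg) ov tv p os ot :
  holds I ov tv (ground_atom p os ot) <-> rel I p (map (cst I) os) ot.
Proof.
  unfold holds, ground_atom; simpl. rewrite map_map.
  replace (option_map (eval_t tv) (option_map TCst ot)) with ot by (destruct ot; reflexivity).
  reflexivity.
Qed.

Lemma fact_ground {Sg} (a : atom Sg) : is_fact a ->
  exists os ot, a = ground_atom (apred a) os ot.
Proof.
  destruct a as [p ob tm]; intros [_ [Ho Ht]]; simpl in *.
  assert (exists os, ob = map OCst os) as [os ->].
  { induction Ho as [|o l [c ->] _ [os IH]]; [exists []|exists (c :: os)]; simpl; congruence. }
  destruct Ht as [-> | [z ->]]; [exists os, None | exists os, (Some z)]; reflexivity.
Qed.

Definition canon {Sg} (P : program Sg) : interp Sg :=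
  {| dom := Obj; cst := fun c => c; rel := fun p os ot => entails P (ground_atom p os ot) |}.

Lemma canon_model {Sg} (P : program Sg) : is_model (canon P) P.
Proof.
  intros r Hr ov tv Hb I HI ov' tv'.
  assert (E : forall a : atom Sg, map (cst I) (map (eval_o (canon P) ov) (aobj a)) =
            map (eval_o I (fun x => cst I (ov x))) (aobj a)).
  { intro a. rewrite map_map. apply map_ext. intros [x|c]; reflexivity. }
  apply holds_ground. unfold holds in *. rewrite E.
  apply (HI r Hr (fun x => cst I (ov x)) tv).
  intros b Hb'. specialize (Hb b Hb' I HI ov' tv').
  apply holds_ground in Hb. rewrite E in Hb. exact Hb.
Qed.

Definition upd (tv : nat -> Z) t c := fun t' => if Nat.eqb t' t then c else tv t'.

Lemma holds_subst {Sg} (I : interp Sg) ov tv t c a :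
  holds I ov tv (subst_atom t c a) <-> holds I ov (upd tv t c) a.
Proof.
  unfold holds, subst_atom; simpl.
  replace (option_map (eval_t tv) (option_map (subst_tterm t c) (atime a)))
    with (option_map (eval_t (upd tv t c)) (atime a)); [reflexivity|].
  destruct (atime a) as [[z|t'|t' k]|]; simpl; unfold upd; try reflexivity;
  destruct (Nat.eqb t' t); reflexivity.
Qed.

Lemma holds_subst_self {Sg} (I : interp Sg) ov tv t a :
  holds I ov tv (subst_atom t (tv t) a) <-> holds I ov tv a.
Proof.
  unfold holds, subst_atom; simpl.
  replace (option_map (eval_t tv) (option_map (subst_tterm t (tv t)) (atime a)))
    with (option_map (eval_t tv) (atime a)); [reflexivity|].
  destruct (atime a) as [[z|t'|t' k]|]; simpl; try reflexivity;
  destruct (Nat.eqb_spec t' t); subst; reflexivity.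
Qed.

Lemma in_zrange lo hi z : In z (zrange lo hi) <-> lo <= z <= hi.
Proof.
  unfold zrange. rewrite in_map_iff. split.
  - intros [i [<- Hi]]. apply in_seq in Hi. lia.
  - intros H. exists (Z.to_nat (z - lo)). split; [lia|]. apply in_seq. lia.
Qed.

Lemma fold_max_ge l x : In x l -> x <= fold_right Z.max 0 l.
Proof. induction l; simpl; [tauto|]. intros [H|H]; subst; [lia|]. specialize (IHl H). lia. Qed.

Lemma fold_max_nonneg l : 0 <= fold_right Z.max 0 l.
Proof. induction l; simpl; lia. Qed.

Lemma map_nth_seq {A} (l : list A) d : map (fun i => nth i l d) (seq 0 (length l)) = l.
Proof.
  induction l; simpl; auto. f_equal. rewrite <- seq_shift, map_map. exact IHl.
Qed.

Section DependencyPaths.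
Context {Sg : Sig} (P : program Sg) (r0 : pred Sg).

Inductive path : nat -> pred Sg -> Prop :=
| path0 : path 0 r0
| pathS n q q' : path n q -> depends P q q' -> path (S n) q'.

Lemma path_clos_trans n q : path n q -> (n > 0)%nat -> clos_trans _ (depends P) r0 q.
Proof.
  induction 1 as [|n q q' Hp IH Hd]; intros Hn; [lia|].
  destruct n; [inversion Hp; subst; now apply t_step|].
  eapply t_trans; [apply IH; lia | now apply t_step].
Qed.

Hypothesis Hacyc : nonrecursive P.

Lemma path_heads n q : path n q ->
  exists l, length l = n /\ NoDup l /\ (forall x, In x l -> clos_trans _ (depends P) x q) /\
    incl l (map (fun r => apred (head r)) P).
Proof.
  induction 1 as [|n q q' Hp IH Hd].
  - exists []. repeat split; [constructor | intros x [] | intros x []].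
  - destruct IH as [l [Hl [Hnd [Hct Hinc]]]].
    exists (l ++ [q]). rewrite length_app; simpl. split; [lia|]. split; [|split].
    + apply NoDup_app; auto; [repeat constructor; intros []|].
      intros x Hx [<-|[]]. apply (Hacyc q), Hct, Hx.
    + intros x Hx. apply in_app_or in Hx as [Hx|[<-|[]]]; [|now apply t_step].
      eapply t_trans; [apply Hct, Hx | now apply t_step].
    + intros x Hx. apply in_app_or in Hx as [Hx|[<-|[]]]; auto.
      destruct Hd as [r [Hr [Hh _]]]. apply in_map_iff. exists r; auto.
Qed.

Lemma path_length_le n q : path n q -> (n <= length P)%nat.
Proof.
  intros Hp. destruct (path_heads n q Hp) as [l [<- [Hnd [_ Hinc]]]].
  rewrite <- (length_map (fun r => apred (head r)) P). now apply NoDup_incl_length.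
Qed.

Lemma path_to_root n : path n r0 -> n = 0%nat.
Proof.
  intros Hp. destruct n; auto. exfalso.
  apply (Hacyc r0), (path_clos_trans (S n)); auto; lia.
Qed.

End DependencyPaths.

Lemma path_preds_of {Sg} (P : program Sg) r0 n q : path P r0 n q -> q <> r0 -> In q (preds_of P).
Proof.
  destruct 1 as [|n q q' _ Hd]; [tauto|]. intros _.
  destruct Hd as [r [Hr [_ [b [Hb <-]]]]]. unfold preds_of. apply in_flat_map.
  exists r. split; auto. simpl. right. apply in_map, Hb.
Qed.

Lemma is_model_app {Sg} (I : interp Sg) P P' :
  is_model I (P ++ P') <-> is_model I P /\ is_model I P'.
Proof.
  unfold is_model. split.
  - intros H. split; intros r Hr; apply H, in_or_app; auto.
  - intros [H H'] r Hr. apply in_app_or in Hr as [Hr|Hr]; auto.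
Qed.

Lemma is_model_facts {Sg} (I : interp Sg) F :
  is_model I (map fact_rule F) <-> forall a, In a F -> forall ov tv, holds I ov tv a.
Proof.
  split.
  - intros H a Ha ov tv. apply (H (fact_rule a) (in_map _ _ _ Ha) ov tv). intros b [].
  - intros H r Hr. apply in_map_iff in Hr as [a [<- Ha]]. intros ov tv _. now apply H.
Qed.

Definition relevant {Sg} (P : program Sg) r0 (R tau : Z) (p : pred Sg) (z : Z) : Prop :=
  exists n, path P r0 n p /\ Z.abs (z - tau) <= Z.of_nat n * R.

Section Relevance.
Context {Sg : Sig} (P : program Sg) (r0 : pred Sg) (R tau : Z).

Lemma relevant_self : relevant P r0 R tau r0 tau.
Proof. exists 0%nat. split; [constructor | simpl; lia]. Qed.

Lemma relevant_step p q zh zb :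
  relevant P r0 R tau p zh -> depends P p q -> Z.abs (zh - zb) <= R -> relevant P r0 R tau q zb.
Proof.
  intros [n [Hp Hn]] Hd Hz. exists (S n). split; [econstructor; eauto|].
  rewrite Nat2Z.inj_succ, Z.mul_succ_l. lia.
Qed.

Lemma relevant_preds_of p z : relevant P r0 R tau p z -> p <> r0 -> In p (preds_of P).
Proof. intros [n [Hp _]]. eapply path_preds_of; eauto. Qed.

Hypothesis Hacyc : nonrecursive P.

Lemma relevant_root z : relevant P r0 R tau r0 z -> z = tau.
Proof. intros [n [Hp Hn]]. apply path_to_root in Hp; auto. subst. simpl in Hn. lia. Qed.

Lemma relevant_bound p z : 0 <= R ->
  relevant P r0 R tau p z -> Z.abs (z - tau) <= Z.of_nat (length P) * R.
Proof.
  intros HR [n [Hp Hn]]. apply path_length_le, Nat2Z.inj_le in Hp; auto.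
  assert (Z.of_nat n * R <= Z.of_nat (length P) * R) by (apply Z.mul_le_mono_nonneg_r; lia). lia.
Qed.

End Relevance.

Definition max_rule_rad {Sg} (P : program Sg) : Z := fold_right Z.max 0 (map rule_rad P).

Lemma atom_time {Sg} (a : atom Sg) : wf_atom a -> is_temporal Sg (apred a) = true ->
  (forall z, atime a <> Some (TCst z)) ->
  exists s t, atime a = Some s /\ tvars_of_atom a = [t] /\ forall tv, eval_t tv s = tv t + delta s.
Proof.
  intros [_ Ht] Htemp Hnz. apply Ht in Htemp. unfold tvars_of_atom.
  destruct (atime a) as [[z|t|t k]|]; [exfalso; eapply Hnz; eauto | | | tauto].
  - exists (TVar t), t. simpl. repeat split. intros; lia.
  - exists (TShift t k), t. simpl. repeat split.
Qed.

Section ConnectedPrograms.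
Context {Sg : Sig} (P : program Sg).
Hypotheses (Hwf : Forall wf_rule P) (Hc : connected P)
  (Hnr : no_rigid_atoms P) (Hnt : no_time_points P).

Lemma rule_atom_time r a : In r P -> In a (atoms_of_rule r) ->
  exists s t, atime a = Some s /\ tvars_of_atom a = [t] /\ forall tv, eval_t tv s = tv t + delta s.
Proof.
  intros Hr Ha. apply atom_time.
  - rewrite Forall_forall in Hwf. destruct (Hwf r Hr) as [Hh [Hb _]].
    destruct Ha as [<-|Ha]; auto. rewrite Forall_forall in Hb; auto.
  - eapply Hnr; eauto.
  - intros z. eapply Hnt; eauto.
Qed.

Lemma rule_time_step r b tv : In r P -> In b (body r) ->
  exists zh zb, option_map (eval_t tv) (atime (head r)) = Some zh /\
    option_map (eval_t tv) (atime b) = Some zb /\ Z.abs (zh - zb) <= max_rule_rad P.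
Proof.
  intros Hr Hb.
  destruct (rule_atom_time r (head r) Hr (or_introl eq_refl)) as [sh [th [Eh [Th Vh]]]].
  destruct (rule_atom_time r b Hr (or_intror Hb)) as [sb [tb [Eb [Tb Vb]]]].
  assert (th = tb).
  { apply (proj1 (Hc r Hr)); unfold tvars_of_rule; apply in_or_app.
    - left. rewrite Th. now left.
    - right. apply in_flat_map. exists b. split; auto. rewrite Tb. now left. }
  subst tb. rewrite Eh, Eb. exists (eval_t tv sh), (eval_t tv sb). repeat split.
  assert (Z.abs (delta sh - delta sb) <= rule_rad r).
  { unfold rule_rad. rewrite Eh. apply fold_max_ge, in_map_iff. exists b. rewrite Eb. auto. }
  assert (rule_rad r <= max_rule_rad P) by apply fold_max_ge, in_map, Hr.
  rewrite Vh, Vb. lia.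
Qed.

(* A time variable in the head must occur in the body, so bodies are nonempty and heads IDB. *)
Lemma rule_head_idb r : In r P -> is_edb Sg (apred (head r)) = false.
Proof.
  intros Hr.
  destruct (rule_atom_time r (head r) Hr (or_introl eq_refl)) as [sh [th [Eh [Th Vh]]]].
  rewrite Forall_forall in Hwf. destruct (Hwf r Hr) as [_ [_ [He [_ Ht]]]].
  apply He. intro E. specialize (Ht th). rewrite Th, E in Ht. apply Ht. now left.
Qed.

End ConnectedPrograms.

Definition pad {Sg} (P : program Sg) (r0 : pred Sg) (tau : Z) (I : interp Sg) : interp Sg :=
  {| dom := dom I; cst := cst I;
     rel := fun p ds ot => rel I p ds ot \/
              exists z, ot = Some z /\ ~ relevant P r0 (max_rule_rad P) tau p z |}.

Section Padding.
Context {Sg : Sig} (P : program Sg).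
Hypotheses (Hwf : Forall wf_rule P) (Hc : connected P)
  (Hnr : no_rigid_atoms P) (Hnt : no_time_points P) (Hacyc : nonrecursive P).
Variables (r0 : pred Sg) (tau : Z) (I : interp Sg).

Notation K := (pad P r0 tau I).
Notation relevant := (relevant P r0 (max_rule_rad P) tau).

Lemma holds_pad ov tv a : holds K ov tv a <->
  holds I ov tv a \/ exists z, option_map (eval_t tv) (atime a) = Some z /\ ~ relevant (apred a) z.
Proof. reflexivity. Qed.

Lemma holds_pad_at ov tv a z : atime a = Some (TCst z) ->
  (relevant (apred a) z -> holds I ov tv a) -> holds K ov tv a.
Proof.
  intros Ez H. apply holds_pad. destruct (classic (relevant (apred a) z)) as [Hz|Hz]; auto.
  right. exists z. rewrite Ez. auto.
Qed.

Lemma pad_sat_rule r : In r P ->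
  (forall ov tv, (forall b, In b (body r) -> holds I ov tv b) ->
     (exists zh, option_map (eval_t tv) (atime (head r)) = Some zh /\
                 relevant (apred (head r)) zh) ->
     holds I ov tv (head r)) ->
  sat_rule K r.
Proof.
  intros Hr H ov tv Hb.
  destruct (rule_atom_time P Hwf Hnr Hnt r (head r) Hr (or_introl eq_refl)) as [sh [th [Eh _]]].
  apply holds_pad. destruct (classic (relevant (apred (head r)) (eval_t tv sh))) as [Hz|Hz].
  2: { right. exists (eval_t tv sh). rewrite Eh. auto. }
  left. apply H; [|exists (eval_t tv sh); rewrite Eh; auto].
  intros b Hbb. destruct (rule_time_step P Hwf Hc Hnr Hnt r b tv Hr Hbb) as [zh [zb [E1 [E2 Hd]]]].
  rewrite Eh in E1. injection E1 as <-.
  destruct (proj1 (holds_pad ov tv b) (Hb b Hbb)) as [Hi|[z [Ez Hj]]]; auto.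
  rewrite E2 in Ez. injection Ez as <-. exfalso. apply Hj. eapply relevant_step; eauto.
  exists r. split; auto. split; auto. exists b; auto.
Qed.

Lemma pad_root ov tv os :
  holds K ov tv (ground_atom r0 os (Some tau)) -> rel I r0 (map (cst I) os) (Some tau).
Proof.
  intros H. apply (holds_ground K) in H as [H|[z [Ez Hj]]]; auto.
  injection Ez as <-. exfalso. apply Hj, relevant_self.
Qed.

End Padding.

Lemma entails_restrict_late {Sg} (P : program Sg) r0 (X U : list (atom Sg)) tmem tau os :
  Forall wf_rule P -> connected P -> no_rigid_atoms P -> no_time_points P -> nonrecursive P ->
  tmem + rad P < tau ->
  entails (P ++ map fact_rule (X ++ U)) (ground_atom r0 os (Some tau)) ->
  entails (P ++ map fact_rule (restrict X tmem ++ U)) (ground_atom r0 os (Some tau)).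
Proof.
  intros Hwf Hc Hnr Hnt Hacyc Htau H I HI ov tv.
  apply is_model_app in HI as [HP HF]. rewrite is_model_facts in HF.
  apply holds_ground, (pad_root P r0 tau I ov tv), H, is_model_app. split.
  - intros r Hr. apply (pad_sat_rule P Hwf Hc Hnr Hnt); auto. intros ov' tv' Hb _. now apply HP.
  - apply is_model_facts. intros a Ha ov' tv'.
    destruct (in_app_or _ _ _ Ha) as [Hx|Hu]; [|apply holds_pad; left; apply HF, in_or_app; auto].
    destruct (keep_after tmem a) eqn:Ek.
    + apply holds_pad. left. apply HF, in_or_app. left. apply filter_In. auto.
    + unfold keep_after in Ek. destruct (atime a) as [[z| |]|] eqn:Ez; try discriminate.
      apply Z.ltb_ge in Ek. apply (holds_pad_at P r0 tau I ov' tv' a z Ez). intros Hrel.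
      apply relevant_bound in Hrel; auto; [|apply fold_max_nonneg].
      unfold rad, max_rule_rad in *. lia.
Qed.

Lemma inst_head_sound {Sg} (I : interp Sg) tau (r : rule Sg) ov tv :
  (forall rr, In rr (inst_head tau r) -> sat_rule I rr) ->
  option_map (eval_t tv) (atime (head r)) = Some tau ->
  (forall b, In b (body r) -> holds I ov tv b) -> holds I ov tv (head r).
Proof.
  intros Hs Eh Hb.
  assert (Hinst : forall t, In (subst_rule t (tv t) r) (inst_head tau r) -> holds I ov tv (head r)).
  { intros t Hin. apply (holds_subst_self I ov tv t), (Hs _ Hin ov tv).
    intros b Hbb. apply in_map_iff in Hbb as [b0 [<- Hb0]]. apply holds_subst_self. auto. }
  unfold inst_head in Hs, Hinst.
  destruct (atime (head r)) as [[z|t|t k]|]; simpl in Eh; injection Eh as Eh || discriminate Eh.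
  - rewrite Eh, Z.eqb_refl in Hs. exact (Hs r (or_introl eq_refl) ov tv Hb).
  - apply (Hinst t). rewrite Eh. now left.
  - apply (Hinst t). replace (tau - k) with (tv t) by lia. now left.
Qed.

Lemma inst_head_complete {Sg} (I : interp Sg) tau (r rr : rule Sg) : In rr (inst_head tau r) ->
  (forall ov tv, (forall b, In b (body r) -> holds I ov tv b) ->
     option_map (eval_t tv) (atime (head r)) = Some tau -> holds I ov tv (head r)) ->
  sat_rule I rr.
Proof.
  intros Hin H.
  assert (Hsub : forall t c,
            (forall tv, option_map (eval_t (upd tv t c)) (atime (head r)) = Some tau) ->
                   sat_rule I (subst_rule t c r)).
  { intros t c Ht ov tv Hb. apply holds_subst, H; [|apply Ht].
    intros b Hbb. apply holds_subst, Hb. simpl. now apply in_map. }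
  unfold inst_head in Hin.
  destruct (atime (head r)) as [[z|t|t k]|]; simpl in *.
  - destruct (Z.eqb_spec z tau) as [<-|]; [|contradiction]. destruct Hin as [<-|[]].
    intros ov tv Hb. now apply H.
  - destruct Hin as [<-|[]]. apply Hsub. intro tv. unfold upd. now rewrite Nat.eqb_refl.
  - destruct Hin as [<-|[]]. apply Hsub. intro tv. unfold upd. rewrite Nat.eqb_refl. f_equal. lia.
  - contradiction.
Qed.

Lemma psi_pred_idb {Sg} (p : pred Sg) : is_edb Sg p = false -> psi_pred p = EOrig p.
Proof. intros H. unfold psi_pred. now rewrite H. Qed.

Lemma psi_pred_edb {Sg} (p : pred Sg) :
  is_edb Sg p = true -> is_temporal Sg p = true -> psi_pred p = EPsi p.
Proof. intros H H'. unfold psi_pred. now rewrite H, H'. Qed.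

Lemma psi_pred_EOrig {Sg} (p q : pred Sg) : psi_pred p = EOrig q -> p = q.
Proof. unfold psi_pred. destruct (is_edb Sg p && is_temporal Sg p); congruence. Qed.

Definition constr_prog {Sg} (Q : query Sg) tin tout tmem (X : list (atom Sg)) : program (ext Sg) :=
  Pi_constr Q tout tmem ++ map fact_rule (D0 Q tin tmem ++ map psi_atom X).

Definition lift {Sg} (u : atom Sg) : atom (ext Sg) :=
  mkAtom (S := ext Sg) (EOrig (apred u)) (aobj u) (atime u).

Definition psi_pull {Sg} (I : interp (ext Sg)) : interp Sg :=
  {| dom := dom I; cst := cst I; rel := fun p => rel I (psi_pred p) |}.

Lemma holds_psi_pull {Sg} (I : interp (ext Sg)) ov tv a :
  holds (psi_pull I) ov tv a <-> holds I ov tv (psi_atom a).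
Proof. reflexivity. Qed.

Lemma copy_rule_fires {Sg} (I : interp (ext Sg)) (p : pred Sg) ds z :
  sat_rule I (copy_rule p) -> length ds = oarity Sg p ->
  rel I (EOrig p) ds (Some z) -> rel I EB [] (Some z) -> rel I (EPsi p) ds (Some z).
Proof.
  intros Hs Hl Ho HB.
  assert (El : map (fun i => nth i ds (cst I 0%nat)) (seq 0 (oarity Sg p)) = ds)
    by (rewrite <- Hl; apply map_nth_seq).
  specialize (Hs (fun i => nth i ds (cst I 0%nat)) (fun _ => z)).
  unfold copy_rule, holds in Hs. simpl in Hs. rewrite map_map in Hs. simpl in Hs. rewrite El in Hs.
  apply Hs. intros b [<-|[<-|[]]]; simpl; [rewrite map_map; simpl; rewrite El|]; assumption.
Qed.

Lemma update_atom {Sg} tin (U : list (atom Sg)) u : update tin U -> In u U ->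
  length (aobj u) = oarity Sg (apred u) /\ is_edb Sg (apred u) = true /\
  is_temporal Sg (apred u) = true /\ exists z, atime u = Some (TCst z) /\ tin < z.
Proof.
  intros [Hd Ht] Hu. unfold dataset in Hd. rewrite Forall_forall in Hd, Ht.
  destruct (Hd u Hu) as [[[Hl _] _] He]. destruct (Ht u Hu) as [Htu Hz]. auto.
Qed.

Section ConstructionRules.
Context {Sg : Sig} (Q : query Sg) (tin tout tmem : Z).
Notation P := (qprog Q).

Lemma psi_rule_in_Pi r : In r P -> apred (head r) <> qpred Q ->
  In (psi_rule r) (Pi_constr Q tout tmem).
Proof.
  intros Hr Hne. apply in_or_app. left. apply filter_In. split; [now apply in_map|].
  unfold is_PQ_head. destruct (peq_dec (ext Sg) _ _) as [E|]; auto.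
  exfalso. apply Hne, psi_pred_EOrig, E.
Qed.

Lemma inst_head_in_Pi r tau rr :
  In r P -> apred (head r) = qpred Q -> is_edb Sg (qpred Q) = false ->
  In tau (out_range Q tout tmem) -> In rr (inst_head tau (psi_rule r)) ->
  In rr (Pi_constr Q tout tmem).
Proof.
  intros Hr Hh He Ht Hrr. apply in_or_app. right. apply in_or_app. left.
  apply in_flat_map. exists (psi_rule r). split; [|apply in_flat_map; eauto].
  apply filter_In. split; [now apply in_map|]. unfold is_PQ_head.
  destruct (peq_dec (ext Sg) _ _) as [|n]; auto.
  exfalso. apply n. simpl. rewrite Hh. now apply psi_pred_idb.
Qed.

Lemma copy_rule_in_Pi p : In p (preds_of P) -> is_edb Sg p = true -> is_temporal Sg p = true ->
  In (copy_rule p) (Pi_constr Q tout tmem).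
Proof.
  intros Hp He Ht. apply in_or_app. right. apply in_or_app. right.
  apply in_map, filter_In. rewrite He, Ht. auto.
Qed.

Lemma B_in_D0 z : In z (upd_range Q tin tmem) ->
  In (mkAtom (S := ext Sg) EB [] (Some (TCst z))) (D0 Q tin tmem).
Proof. intros Hz. exact (in_map (fun t => mkAtom (S := ext Sg) EB [] (Some (TCst t))) _ _ Hz). Qed.

End ConstructionRules.

Section ConstructionComplete.
Context {Sg : Sig} (Q : query Sg) (tin tout tmem : Z).
Notation P := (qprog Q).
Hypotheses (Hwf : Forall wf_rule P) (Hc : connected P) (Hnr : no_rigid_atoms P)
  (Hnt : no_time_points P) (Hacyc : nonrecursive P) (HQ : is_edb Sg (qpred Q) = false).
Variables (X U : list (atom Sg)) (D' : list (atom (ext Sg))) (tau : Z) (I : interp (ext Sg)).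
Hypotheses (HU : update tin U) (HUD : forall u, In u U -> In (lift u) D')
  (Htau : In tau (out_range Q tout tmem)) (HIPi : is_model I (Pi_constr Q tout tmem))
  (HIF : forall a, In a (D0 Q tin tmem ++ map psi_atom X ++ D') -> forall ov tv, holds I ov tv a).

Notation K := (pad P (qpred Q) tau (psi_pull I)).

Lemma pad_pull_sat_program : is_model K P.
Proof.
  intros r Hr. apply (pad_sat_rule P Hwf Hc Hnr Hnt); auto.
  intros ov tv Hb [zh [Ezh Hrel]]. apply holds_psi_pull.
  assert (Hpb : forall b, In b (body (psi_rule r)) -> holds I ov tv b).
  { intros b Hbb. apply in_map_iff in Hbb as [b0 [<- Hb0]]. now apply holds_psi_pull, Hb. }
  destruct (peq_dec Sg (apred (head r)) (qpred Q)) as [Heq|Hne].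
  - rewrite Heq in Hrel. apply relevant_root in Hrel; auto. subst zh.
    apply (inst_head_sound I tau (psi_rule r) ov tv); auto.
    intros rr Hrr. apply HIPi. eapply inst_head_in_Pi; eauto.
  - exact (HIPi _ (psi_rule_in_Pi Q tout tmem r Hr Hne) ov tv Hpb).
Qed.

Lemma pad_pull_sat_history a ov tv : In a X -> holds K ov tv a.
Proof.
  intros Ha. apply holds_pad. left. apply holds_psi_pull, HIF.
  apply in_or_app. right. apply in_or_app. left. now apply in_map.
Qed.

(* An update fact relevant for the query lies in the update-relevant window, so the copy
   rule of part (iii) transfers it from [D'] to its [psi] copy. *)
Lemma pad_pull_sat_update a ov tv : In a U -> holds K ov tv a.
Proof.
  intros Ha. destruct (update_atom tin U a HU Ha) as [Hl [He [Ht [z [Ez Hz]]]]].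
  apply (holds_pad_at P (qpred Q) tau (psi_pull I) ov tv a z Ez). intros Hrel.
  assert (Hpred : In (apred a) (preds_of P)) by (eapply relevant_preds_of; eauto; congruence).
  apply relevant_bound in Hrel; [|auto|apply fold_max_nonneg].
  unfold out_range in Htau. rewrite in_zrange in Htau.
  apply holds_psi_pull. unfold holds, psi_atom. simpl. rewrite psi_pred_edb, Ez by auto.
  apply copy_rule_fires; [apply HIPi, copy_rule_in_Pi; auto | now rewrite length_map | |].
  - assert (Hd := HIF (lift a) ltac:(apply in_or_app; right; apply in_or_app; right; auto) ov tv).
    unfold holds in Hd. simpl in Hd. now rewrite Ez in Hd.
  - assert (Hw : In z (upd_range Q tin tmem))
      by (apply in_zrange; unfold rad, max_rule_rad in *; lia).
    exact (HIF _ (in_or_app _ _ _ (or_introl (B_in_D0 Q tin tmem z Hw))) ov tv).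
Qed.

Lemma pad_pull_model : is_model K (P ++ map fact_rule (X ++ U)).
Proof.
  apply is_model_app. split; [exact pad_pull_sat_program|].
  apply is_model_facts. intros a Ha ov tv.
  destruct (in_app_or _ _ _ Ha); [apply pad_pull_sat_history | apply pad_pull_sat_update]; auto.
Qed.

End ConstructionComplete.

Lemma constr_entails_of_entails {Sg} (Q : query Sg) tin tout tmem X U D' tau os :
  Forall wf_rule (qprog Q) -> connected (qprog Q) -> no_rigid_atoms (qprog Q) ->
  no_time_points (qprog Q) -> nonrecursive (qprog Q) -> is_edb Sg (qpred Q) = false ->
  update tin U -> (forall u, In u U -> In (lift u) D') -> In tau (out_range Q tout tmem) ->
  entails (qprog Q ++ map fact_rule (X ++ U)) (ground_atom (qpred Q) os (Some tau)) ->
  entails (constr_prog Q tin tout tmem X ++ map fact_rule D')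
          (ground_atom (S := ext Sg) (EOrig (qpred Q)) os (Some tau)).
Proof.
  intros Hwf Hc Hnr Hnt Hacyc HQ HU HUD Htau HE I HI ov tv.
  unfold constr_prog in HI. rewrite <- app_assoc, <- map_app, <- app_assoc in HI.
  apply is_model_app in HI as [HIPi HIF]. rewrite is_model_facts in HIF.
  apply holds_ground. rewrite <- (psi_pred_idb _ HQ).
  apply (pad_root (qprog Q) (qpred Q) tau (psi_pull I) ov tv), HE.
  eapply pad_pull_model; eauto.
Qed.

Section ConstructionSound.
Context {Sg : Sig} (Q : query Sg) (tin tout tmem : Z).
Notation P := (qprog Q).
Hypotheses (Hwf : Forall wf_rule P) (Hnr : no_rigid_atoms P) (Hnt : no_time_points P)
  (HQ : is_edb Sg (qpred Q) = false).
Variables (X U : list (atom Sg)) (D' : list (atom (ext Sg))).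
Hypotheses (HX : dataset X) (HD' : dataset D')
  (HUD : forall p ds z, In (ground_atom (S := ext Sg) (EOrig p) ds (Some z)) D' ->
     is_edb Sg p = true -> is_temporal Sg p = true -> In z (upd_range Q tin tmem) ->
     In (ground_atom p ds (Some z)) U).

Notation M := (canon (P ++ map fact_rule (X ++ U))).

(* Rigid EDB predicates never occur in [P], so they may be interpreted arbitrarily. *)
Definition constr_interp : interp (ext Sg) :=
  {| dom := Obj; cst := fun c => c;
     rel := fun (p : pred (ext Sg)) (ds : list Obj) (ot : option Z) =>
       match p with
       | EOrig q =>
           if is_edb Sg q
           then In (ground_atom (S := ext Sg) (EOrig q) ds ot) D' \/ is_temporal Sg q = false
           else rel M q ds ot /\
                (q = qpred Q -> exists t, ot = Some t /\ In t (out_range Q tout tmem))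
       | EPsi q => rel M q ds ot
       | EB => exists z, ot = Some z /\ In z (upd_range Q tin tmem)
       end |}.

Notation J := constr_interp.

Lemma constr_interp_psi q ds ot :
  is_temporal Sg q = true -> rel J (psi_pred q) ds ot -> rel M q ds ot.
Proof.
  intros Ht. unfold psi_pred. rewrite Ht, andb_true_r.
  destruct (is_edb Sg q) eqn:Eq; simpl; [auto|]. rewrite Eq. now intros [H _].
Qed.

Lemma canon_head_of_constr_body r ov tv : In r P ->
  (forall b, In b (body r) -> holds J ov tv (psi_atom b)) -> holds M ov tv (head r).
Proof.
  intros Hr Hb. apply (canon_model _ r (in_or_app _ _ _ (or_introl Hr))).
  intros b Hbb. apply constr_interp_psi; [eapply Hnr; eauto; now right | apply Hb, Hbb].
Qed.

Lemma constr_interp_sat_part_i rr : In rr (part_i Q) -> sat_rule J rr.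
Proof.
  intros Hrr. apply filter_In in Hrr as [Hrr Hn]. apply in_map_iff in Hrr as [r [<- Hr]].
  intros ov tv Hb.
  assert (Hh := canon_head_of_constr_body r ov tv Hr (fun b Hbb => Hb _ (in_map _ _ _ Hbb))).
  assert (Hidb := rule_head_idb P Hwf Hnr Hnt r Hr).
  unfold holds. simpl. rewrite (psi_pred_idb _ Hidb). simpl. rewrite Hidb. split; [exact Hh|].
  intros E. unfold is_PQ_head in Hn. simpl in Hn. rewrite (psi_pred_idb _ Hidb), E in Hn.
  destruct (epred_eq_dec Sg _ _); [discriminate | congruence].
Qed.

Lemma constr_interp_sat_part_ii rr : In rr (part_ii Q tout tmem) -> sat_rule J rr.
Proof.
  intros Hrr. apply in_flat_map in Hrr as [r' [Hr' Hrr]]. apply in_flat_map in Hrr as [t [Ht Hrr]].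
  apply filter_In in Hr' as [Hr' Hq]. apply in_map_iff in Hr' as [r [<- Hr]].
  assert (Hh : apred (head r) = qpred Q).
  { unfold is_PQ_head in Hq. destruct (peq_dec (ext Sg) _ _) as [E|]; [|discriminate].
    exact (psi_pred_EOrig _ _ E). }
  apply (inst_head_complete J t (psi_rule r) rr Hrr). intros ov tv Hb Et.
  assert (Hm := canon_head_of_constr_body r ov tv Hr (fun b Hbb => Hb _ (in_map _ _ _ Hbb))).
  unfold holds in *. simpl in *. rewrite Hh, (psi_pred_idb _ HQ). simpl. rewrite HQ.
  rewrite Hh in Hm. split; [exact Hm|]. intros _. exists t. auto.
Qed.

Lemma constr_interp_sat_part_iii rr : In rr (part_iii Q) -> sat_rule J rr.
Proof.
  intros Hrr. apply in_map_iff in Hrr as [p [<- Hp]]. apply filter_In in Hp as [_ Hp].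
  apply andb_prop in Hp as [He Ht]. intros ov tv Hb.
  assert (H1 := Hb _ (or_introl eq_refl)). assert (H2 := Hb _ (or_intror (or_introl eq_refl))).
  unfold holds in *. simpl in *. rewrite He, Ht in H1.
  destruct H1 as [H1|H1]; [|discriminate]. destruct H2 as [z [Ez Hz]]. injection Ez as <-.
  apply fact_entailed, in_or_app. right. apply in_map, in_or_app. right.
  unfold ground_atom in HUD. rewrite <- (map_id (map _ _)). apply HUD; auto. now rewrite map_id.
Qed.

Lemma constr_interp_sat_facts a ov tv :
  In a (D0 Q tin tmem ++ map psi_atom X ++ D') -> holds J ov tv a.
Proof.
  intros Ha. apply in_app_or in Ha as [Ha|Ha]; [|apply in_app_or in Ha as [Ha|Ha]].
  - apply in_map_iff in Ha as [z [<- Hz]]. unfold holds. simpl. eauto.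
  - apply in_map_iff in Ha as [a0 [<- Ha0]]. unfold dataset in HX. rewrite Forall_forall in HX.
    destruct (HX a0 Ha0) as [Hf He]. destruct (fact_ground a0 Hf) as [os [ot Eg]].
    rewrite Eg. apply (holds_ground J ov tv (psi_pred (apred a0)) os ot). simpl. rewrite map_id.
    unfold psi_pred. rewrite He. simpl.
    destruct (is_temporal Sg (apred a0)) eqn:Et; simpl; [|rewrite He; now right].
    apply fact_entailed, in_or_app. right. apply in_map, in_or_app. left. rewrite <- Eg. exact Ha0.
  - unfold dataset in HD'. rewrite Forall_forall in HD'.
    destruct (HD' a Ha) as [Hf He]. destruct (fact_ground a Hf) as [os [ot Eg]].
    rewrite Eg. apply holds_ground. simpl. rewrite map_id.
    destruct (apred a) as [p|p|]; simpl in He; try discriminate. rewrite He. left.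
    rewrite <- Eg. exact Ha.
Qed.

Lemma constr_interp_model : is_model J (constr_prog Q tin tout tmem X ++ map fact_rule D').
Proof.
  unfold constr_prog. rewrite <- app_assoc, <- map_app, <- app_assoc.
  apply is_model_app. split; [|apply is_model_facts; intros; now apply constr_interp_sat_facts].
  intros rr Hrr. apply in_app_or in Hrr as [Hrr|Hrr]; [|apply in_app_or in Hrr as [Hrr|Hrr]].
  - now apply constr_interp_sat_part_i.
  - now apply constr_interp_sat_part_ii.
  - now apply constr_interp_sat_part_iii.
Qed.

End ConstructionSound.



Lemma entails_of_constr_entails {Sg} (Q : query Sg) tin tout tmem X U D' tau os :
  Forall wf_rule (qprog Q) -> no_rigid_atoms (qprog Q) -> no_time_points (qprog Q) ->
  is_edb Sg (qpred Q) = false -> dataset X -> dataset D' ->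
  (forall p ds z, In (ground_atom (S := ext Sg) (EOrig p) ds (Some z)) D' -> is_edb Sg p = true ->
     is_temporal Sg p = true -> In z (upd_range Q tin tmem) -> In (ground_atom p ds (Some z)) U) ->
  entails (constr_prog Q tin tout tmem X ++ map fact_rule D')
          (ground_atom (S := ext Sg) (EOrig (qpred Q)) os (Some tau)) ->
  In tau (out_range Q tout tmem) /\
  entails (qprog Q ++ map fact_rule (X ++ U)) (ground_atom (qpred Q) os (Some tau)).
Proof.
  intros Hwf Hnr Hnt HQ HX HD' HUD HE.
  specialize (HE _ (constr_interp_model Q tin tout tmem Hwf Hnr Hnt HQ X U D' HX HD' HUD)
                 (fun _ => 0%nat) (fun _ => 0)).
  apply holds_ground in HE. simpl in HE. rewrite map_id, HQ in HE.
  destruct HE as [HM Hout]. destruct (Hout eq_refl) as [t [Et Ht]]. injection Et as <-. auto.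
Qed.

Lemma dataset_restrict {Sg} (X : list (atom Sg)) tmem : dataset X -> dataset (restrict X tmem).
Proof.
  unfold dataset. rewrite !Forall_forall. intros H x Hx. apply filter_In in Hx. apply H, Hx.
Qed.

Lemma entails_restrict {Sg} (P : program Sg) X U tmem a :
  entails (P ++ map fact_rule (restrict X tmem ++ U)) a -> entails (P ++ map fact_rule (X ++ U)) a.
Proof.
  apply entails_mono, incl_app_app, incl_map, incl_app_app;
    [apply incl_refl | apply incl_filter | apply incl_refl].
Qed.

Lemma dataset_lift_update {Sg} tin (U : list (atom Sg)) : update tin U -> dataset (map lift U).
Proof.
  intros HU. unfold dataset. rewrite Forall_forall.
  intros a Ha. apply in_map_iff in Ha as [u [<- Hu]].
  destruct HU as [Hd _]. unfold dataset in Hd. rewrite Forall_forall in Hd. exact (Hd u Hu).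
Qed.

Lemma lift_ground_in {Sg} (U : list (atom Sg)) (p : pred Sg) ds ot :
  In (ground_atom (S := ext Sg) (EOrig p) ds ot) (map lift U) -> In (ground_atom p ds ot) U.
Proof.
  intros H. apply in_map_iff in H as [[pu ou tu] [Eu Hu]].
  unfold lift in Eu. simpl in Eu. injection Eu as -> -> ->. exact Hu.
Qed.

Definition unlift_update {Sg} (tin : Z) (a : atom (ext Sg)) : list (atom Sg) :=
  match apred a, atime a with
  | EOrig p, Some (TCst z) =>
      if is_edb Sg p && is_temporal Sg p && (tin <? z) then [mkAtom p (aobj a) (atime a)] else []
  | _, _ => []
  end.

Lemma unlift_update_spec {Sg} tin (a : atom (ext Sg)) u : is_fact a -> In u (unlift_update tin a) ->
  (is_fact u /\ is_edb Sg (apred u) = true) /\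
  (is_temporal Sg (apred u) = true /\ exists z, atime u = Some (TCst z) /\ tin < z) /\ lift u = a.
Proof.
  intros [[Hl Ht] [Ho Htm]] Hu. unfold unlift_update in Hu.
  destruct a as [[p|p|] ob [[z| |]|]]; simpl in *; try contradiction.
  destruct (is_edb Sg p) eqn:He, (is_temporal Sg p) eqn:Et, (Z.ltb_spec tin z);
    simpl in Hu; try contradiction.
  destruct Hu as [<-|[]]. repeat split; simpl; eauto; discriminate.
Qed.

Lemma unlift_update_dataset {Sg} tin (D' : list (atom (ext Sg))) : dataset D' ->
  update tin (flat_map (unlift_update tin) D') /\
  forall u, In u (flat_map (unlift_update tin) D') -> In (lift u) D'.
Proof.
  unfold update, dataset. rewrite !Forall_forall. intros HD'.
  assert (H : forall u, In u (flat_map (unlift_update tin) D') ->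
    ((is_fact u /\ is_edb Sg (apred u) = true) /\
     (is_temporal Sg (apred u) = true /\ exists z, atime u = Some (TCst z) /\ tin < z)) /\
    In (lift u) D').
  { intros u Hu. apply in_flat_map in Hu as [a [Ha Hu]].
    destruct (unlift_update_spec tin a u (proj1 (HD' a Ha)) Hu) as [H1 [H2 <-]]. auto. }
  split; [split|]; intros u Hu; apply H, Hu.
Qed.

Lemma unlift_update_ground {Sg} tin (p : pred Sg) ds z :
  is_edb Sg p = true -> is_temporal Sg p = true -> tin < z ->
  In (ground_atom p ds (Some z))
     (unlift_update tin (ground_atom (S := ext Sg) (EOrig p) ds (Some z))).
Proof.
  intros He Ht Hz. unfold unlift_update. simpl. rewrite He, Ht. simpl.
  destruct (Z.ltb_spec tin z); [now left | lia].
Qed.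

Section ForgetCharacterization.
Context {Sg : Sig} (Q : query Sg) (D : list (atom Sg)) (tin tout tmem : Z).
Notation P := (qprog Q).
Hypotheses (Hwf : Forall wf_rule P) (Hc : connected P) (Hnr : no_rigid_atoms P)
  (Hnt : no_time_points P) (Hacyc : nonrecursive P) (HQ : is_edb Sg (qpred Q) = false)
  (Htemp : temporal_query Q) (HD : dataset D).

Lemma forget_contained :
  forget Q D tin tout tmem -> contained (Q1 Q tin tout tmem D) (Q2 Q tin tout tmem D).
Proof.
  intros Hf D' HD' os ot [Hl [Ht HE]].
  destruct ot as [tau|]; [|exfalso; now apply Ht in Htemp].
  destruct (unlift_update_dataset tin D' HD') as [HU HUD].
  set (U := flat_map (unlift_update tin) D') in HU, HUD.
  assert (HDU : forall p ds z, In (ground_atom (S := ext Sg) (EOrig p) ds (Some z)) D' ->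
     is_edb Sg p = true -> is_temporal Sg p = true -> In z (upd_range Q tin tmem) ->
     In (ground_atom p ds (Some z)) U).
  { intros p ds z Hin He Htp Hz. apply in_flat_map. eexists. split; [exact Hin|].
    apply in_zrange in Hz. apply unlift_update_ground; auto. lia. }
  destruct (entails_of_constr_entails Q tin tout tmem D U D' tau os Hwf Hnr Hnt HQ HD HD' HDU HE)
    as [Htau HE1].
  assert (Hout := proj1 (proj1 (in_zrange _ _ _) Htau)).
  destruct (proj1 (Hf U HU tau Hout os) (conj Hl (conj Ht HE1))) as [_ [_ HE2]].
  split; [exact Hl | split; [exact Ht|]].
  exact (constr_entails_of_entails Q tin tout tmem (restrict D tmem) U D' tau os
           Hwf Hc Hnr Hnt Hacyc HQ HU HUD Htau HE2).
Qed.

(* Answers beyond [tmem + rad] never see the forgotten facts; the others are exactly the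
   output-relevant answers of [Q1], with the update encoded as [lift U]. *)
Lemma contained_forget :
  contained (Q1 Q tin tout tmem D) (Q2 Q tin tout tmem D) -> forget Q D tin tout tmem.
Proof.
  intros Hcont U HU tau Htau os. split; intros [Hl [Ht HE]]; split; auto; split; auto.
  2: now apply entails_restrict with (tmem := tmem).
  destruct (Z_le_gt_dec tau (tmem + rad P)) as [Hle|Hgt].
  - assert (Hout : In tau (out_range Q tout tmem)) by (apply in_zrange; lia).
    assert (HD' := dataset_lift_update tin U HU).
    assert (HE1 := constr_entails_of_entails Q tin tout tmem D U (map lift U) tau os
                     Hwf Hc Hnr Hnt Hacyc HQ HU (in_map lift U) Hout HE).
    destruct (Hcont (map lift U) HD' os (Some tau) (conj Hl (conj Ht HE1))) as [_ [_ HE2]].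
    refine (proj2 (entails_of_constr_entails Q tin tout tmem (restrict D tmem) U (map lift U) tau os
                     Hwf Hnr Hnt HQ (dataset_restrict D tmem HD) HD' _ HE2)).
    intros p ds z Hin _ _ _. now apply lift_ground_in.
  - apply entails_restrict_late; auto. lia.
Qed.

End ForgetCharacterization.

Theorem lemma8 (S : Sig) (Q : query S) (D : list (atom S)) (tin tout tmem : Z) :
  forget_instance Q D tin tout tmem ->
  nonrecursive (qprog Q) ->
  connected (qprog Q) ->
  no_rigid_atoms (qprog Q) ->
  no_time_points (qprog Q) ->
  (forget Q D tin tout tmem <->
   contained (Q1 Q tin tout tmem D) (Q2 Q tin tout tmem D)).
Proof.
  intros [[[_ Hwf] [HQ _]] [Htemp [[HD _] _]]] Hacyc Hc Hnr Hnt.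
  split; [apply forget_contained | apply contained_forget]; assumption.
Qed.
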